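(* Let $L\subseteq\Sigma^*$ with $L\notin\{\emptyset,\Sigma^*\}$, and suppose $L$ is prefix-closed, suffix-closed, factor-closed, or subword-closed. Then: - $L^{-*}=L^-\cup\{\epsilon\}$ and $L^{-*-}=L\setminus\{\epsilon\}$; - $(L\setminus\{\epsilon\})^*=L^*$; - $L^*$ is closed under the same relation as $L$. Consequently, every language obtainable from $L$ by finitely many applications of Kleene star and complement is one of the eight languages $L$, $L^-$, $L^-\cup\{\epsilon\}$, $L\setminus\{\epsilon\}$, $L^*$, $L^{*-}$, $L^{*-}\cup\{\epsilon\}$, $L^*\setminus\{\epsilon\}$.
   Context: $L^-=\Sigma^*\setminus L$ denotes complement and $L^*$ Kleene star. Notation such as $L^{-*-}$ means apply complement, then star, then complement, in that order. A language is prefix-closed (suffix-, factor-, subword-closed) if it contains every prefix (suffix, factor, subword) of each of its words, where subword means scattered subsequence. *)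

From mathcomp Require Import all_boot.
Set Implicit Arguments. Unset Strict Implicit. Unset Printing Implicit Defensive.

Definition lang (T : Type) := seq T -> Prop.

Definition lang_eq (T : Type) (K M : lang T) : Prop := forall w, K w <-> M w.

Definition compl (T : Type) (L : lang T) : lang T := fun w => ~ L w.

Inductive star (T : Type) (L : lang T) : lang T :=
| star_nil : star L [::]
| star_app : forall u v, L u -> star L v -> star L (u ++ v).

Definition add_eps (T : Type) (L : lang T) : lang T := fun w => L w \/ w = [::].
Definition rem_eps (T : Type) (L : lang T) : lang T := fun w => L w /\ w <> [::].

(* L is closed under the relation R: if R u v ("u is an R-part of v")
   and v \in L then u \in L. Used with R = prefix, suffix, infix (factor),
   subseq (scattered subword). *)
Definition closed_under (T : Type) (R : seq T -> seq T -> bool) (L : lang T) : Prop :=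
  forall u v, R u v -> L v -> L u.

Inductive star_compl_reach (T : Type) (L : lang T) : lang T -> Prop :=
| scr_base : star_compl_reach L L
| scr_star : forall K, star_compl_reach L K -> star_compl_reach L (star K)
| scr_compl : forall K, star_compl_reach L K -> star_compl_reach L (compl K).

From mathcomp Require Import all_boot.
From Stdlib Require Import Classical.
Set Implicit Arguments.

(* Two properties of the four relations drive everything.  First, a part of
   a concatenation [u ++ v] is a concatenation of a part of [u] and a part of
   [v]; hence a star of closed words is closed.  Second, one of [u] and [v]
   is a part of [u ++ v]; hence a product of non-members of a closed language
   is again a non-member, so [L^-*] only adds the empty word.  The list of
   eight languages is then closed under star and complement by the identities
   [K** = K*], [(K + eps)* = (K - eps)* = K*], [K-- = K] and
   [(K^- + eps)^- = K - eps].  Nonemptiness and non-fullness of [L] are only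
   needed to make the eight languages distinct, which is not claimed here. *)

Section WordParts.
Context {T : eqType}.
Implicit Types u v s : seq T.

Lemma take_cat_take n u v : take n (u ++ v) = take n u ++ take (n - size u) v.
Proof. by elim: u n => [|x u IH] [|n] //=; rewrite ?subn0 ?take0 ?IH ?subSS. Qed.

Lemma drop_cat_drop n u v : drop n (u ++ v) = drop n u ++ drop (n - size u) v.
Proof. by elim: u n => [|x u IH] [|n] //=; rewrite ?subn0 ?drop0 ?IH ?subSS. Qed.

Definition splits_cat (R : seq T -> seq T -> bool) :=
  forall s u v, R s (u ++ v) -> exists s1 s2, [/\ s = s1 ++ s2, R s1 u & R s2 v].

Lemma prefix_splits_cat : splits_cat (@prefix T).
Proof.
move=> s u v /prefixP [t Ht].
have -> : s = take (size s) (u ++ v) by rewrite Ht take_size_cat.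
by rewrite take_cat_take; exists (take (size s) u), (take (size s - size u) v);
  split; rewrite ?prefix_take.
Qed.

Lemma suffix_splits_cat : splits_cat (@suffix T).
Proof.
move=> s u v /suffixP [t Ht].
have -> : s = drop (size t) (u ++ v) by rewrite Ht drop_size_cat.
by rewrite drop_cat_drop; exists (drop (size t) u), (drop (size t - size u) v);
  split; rewrite ?suffix_drop.
Qed.

Lemma infix_splits_cat : splits_cat (@infix T).
Proof.
move=> s u v /infixP [p [q Hpq]].
have -> : s = take (size s) (drop (size p) (u ++ v)).
  by rewrite Hpq drop_size_cat // take_size_cat.
rewrite drop_cat_drop take_cat_take; do 2 eexists; split; first reflexivity;
  exact: (prefix_suffix_trans (prefix_take _ _) (suffix_drop _ _)).
Qed.

Lemma subseq_splits_cat : splits_cat (@subseq T).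
Proof.
move=> s u v /subseqP [m size_m ->].
have size_m1 : size (take (size u) m) = size u.
  by rewrite size_takel // size_m size_cat leq_addr.
rewrite -(cat_take_drop (size u) m) mask_cat //.
by do 2 eexists; split; first reflexivity; apply: mask_subseq.
Qed.

End WordParts.

Section StarClosure.
Context {T : eqType}.
Variable R : seq T -> seq T -> bool.
Hypothesis R_splits : splits_cat R.
Hypothesis R_nil : forall s, R s [::] -> s = [::].

Lemma star_closed_under (K : lang T) : closed_under R K -> closed_under R (star K).
Proof.
move=> closedK s w Rsw Kw; elim: w / Kw s Rsw => [|u v Ku _ IH] s Rsw.
  by rewrite (R_nil Rsw); constructor.
case/R_splits: Rsw => s1 [s2 [-> Rs1 Rs2]].
by constructor; [apply: closedK Rs1 Ku | apply: IH].
Qed.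

End StarClosure.

Section StarComplement.
Context {T : eqType}.
Variable R : seq T -> seq T -> bool.
Hypothesis R_cat : forall u v, R u (u ++ v) \/ R v (u ++ v).

Lemma star_compl_closed (K : lang T) : closed_under R K ->
  lang_eq (star (compl K)) (add_eps (compl K)).
Proof.
move=> closedK w; split; last first.
  by case=> [nKw|->]; [rewrite -(cats0 w); apply: star_app nKw (star_nil _) | constructor].
elim=> [|u v nKu _ [nKv|->]]; [by right | left => Kuv | by left; rewrite cats0].
by case: (R_cat u v) => Ruv; [apply: nKu | apply: nKv]; apply: closedK Ruv Kuv.
Qed.

End StarComplement.

Section LanguageAlgebra.
Context {T : eqType}.
Implicit Types K M N : lang T.

Lemma lang_eq_trans K M N : lang_eq K M -> lang_eq M N -> lang_eq K N.
Proof. by move=> KM MN w; rewrite KM MN. Qed.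

Lemma star_mono K M : (forall w, K w -> M w) -> forall w, star K w -> star M w.
Proof. by move=> KM w; elim=> [|u v Ku _ IH]; constructor; auto. Qed.

Lemma star_lang_eq K M : lang_eq K M -> lang_eq (star K) (star M).
Proof. by move=> KM w; split; apply: star_mono => x; apply KM. Qed.

Lemma compl_lang_eq K M : lang_eq K M -> lang_eq (compl K) (compl M).
Proof. by move=> KM w; rewrite /compl KM. Qed.

Lemma star_cat K u v : star K u -> star K v -> star K (u ++ v).
Proof. by elim=> [|a b Ka _ IH] // Kv; rewrite -catA; constructor; auto. Qed.

Lemma star_idem K : lang_eq (star (star K)) (star K).
Proof.
move=> w; split; first by elim=> [|u v Ku _ IH]; [constructor | apply: star_cat].
by apply: star_mono => x Kx; rewrite -(cats0 x); apply: star_app Kx (star_nil _).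
Qed.

Lemma star_rem_eps K : lang_eq (star (rem_eps K)) (star K).
Proof.
move=> w; split; first by apply: star_mono => x [].
elim=> [|u v Ku _ IH]; first constructor.
by case: (classic (u = [::])) => [->|u_nil] //; constructor.
Qed.

Lemma star_add_eps K : lang_eq (star (add_eps K)) (star K).
Proof.
move=> w; split; last by apply: star_mono => x; left.
by elim=> [|u v [Ku|->] _ IH] //; constructor.
Qed.

Lemma compl_compl K : lang_eq (compl (compl K)) K.
Proof. by move=> w; split; [apply: NNPP | move=> Kw; apply]. Qed.

Lemma compl_add_eps_compl K : lang_eq (compl (add_eps (compl K))) (rem_eps K).
Proof.
move=> w; split; last by case=> Kw w_nil [].
by move=> H; split; [apply: NNPP => nKw | move=> w_nil]; apply: H; [left | right].
Qed.

Lemma compl_rem_eps K : lang_eq (compl (rem_eps K)) (add_eps (compl K)).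
Proof.
move=> w; split; last by case=> [nKw [] | -> []].
by move=> H; case: (classic (w = [::])) => w_nil; [right | left => Kw; apply: H].
Qed.

End LanguageAlgebra.

Section StarComplementOrbit.
Context {T : eqType}.
Variable L : lang T.

Definition star_compl_orbit (K : lang T) :=
  lang_eq K L \/ lang_eq K (compl L) \/ lang_eq K (add_eps (compl L)) \/
  lang_eq K (rem_eps L) \/ lang_eq K (star L) \/ lang_eq K (compl (star L)) \/
  lang_eq K (add_eps (compl (star L))) \/ lang_eq K (rem_eps (star L)).

Hypothesis star_complL : lang_eq (star (compl L)) (add_eps (compl L)).
Hypothesis star_compl_starL :
  lang_eq (star (compl (star L))) (add_eps (compl (star L))).

Lemma star_compl_orbit_star K : star_compl_orbit K -> star_compl_orbit (star K).
Proof.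
case=> [H|[H|[H|[H|[H|[H|[H|H]]]]]]].
- by do 4 right; left; apply: star_lang_eq.
- by do 2 right; left; exact: lang_eq_trans (star_lang_eq H) star_complL.
- by do 2 right; left; exact: lang_eq_trans (star_lang_eq H) (lang_eq_trans (star_add_eps _) star_complL).
- by do 4 right; left; exact: lang_eq_trans (star_lang_eq H) (star_rem_eps _).
- by do 4 right; left; exact: lang_eq_trans (star_lang_eq H) (star_idem _).
- by do 6 right; left; exact: lang_eq_trans (star_lang_eq H) star_compl_starL.
- do 6 right; left;
    exact: lang_eq_trans (star_lang_eq H) (lang_eq_trans (star_add_eps _) star_compl_starL).
- by do 4 right; left; exact: lang_eq_trans (star_lang_eq H) (lang_eq_trans (star_rem_eps _) (star_idem _)).
Qed.

Lemma star_compl_orbit_compl K : star_compl_orbit K -> star_compl_orbit (compl K).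
Proof.
case=> [H|[H|[H|[H|[H|[H|[H|H]]]]]]].
- by right; left; apply: compl_lang_eq.
- by left; exact: lang_eq_trans (compl_lang_eq H) (compl_compl _).
- by do 3 right; left; exact: lang_eq_trans (compl_lang_eq H) (compl_add_eps_compl _).
- by do 2 right; left; exact: lang_eq_trans (compl_lang_eq H) (compl_rem_eps _).
- by do 5 right; left; apply: compl_lang_eq.
- by do 4 right; left; exact: lang_eq_trans (compl_lang_eq H) (compl_compl _).
- by do 7 right; exact: lang_eq_trans (compl_lang_eq H) (compl_add_eps_compl _).
- by do 6 right; left; exact: lang_eq_trans (compl_lang_eq H) (compl_rem_eps _).
Qed.

Lemma star_compl_reach_orbit K : star_compl_reach L K -> star_compl_orbit K.
Proof.
elim=> [|M _ IH|M _ IH]; first by left.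
- exact: star_compl_orbit_star.
- exact: star_compl_orbit_compl.
Qed.

End StarComplementOrbit.

Theorem mainTheorem11 (T : finType) (L : lang T)
  (R : seq T -> seq T -> bool)
  (hR : R = @seq.prefix T \/ R = @seq.suffix T \/ R = @seq.infix T \/ R = @seq.subseq T)
  (hclosed : closed_under R L)
  (hne : exists w, L w) (hnfull : exists w, ~ L w) :
  [/\ lang_eq (star (compl L)) (add_eps (compl L)),
      lang_eq (compl (star (compl L))) (rem_eps L),
      lang_eq (star (rem_eps L)) (star L),
      closed_under R (star L)
    & forall K, star_compl_reach L K ->
      lang_eq K L \/ lang_eq K (compl L) \/ lang_eq K (add_eps (compl L)) \/
      lang_eq K (rem_eps L) \/ lang_eq K (star L) \/ lang_eq K (compl (star L)) \/
      lang_eq K (add_eps (compl (star L))) \/ lang_eq K (rem_eps (star L))].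
Proof.
have R_splits : splits_cat R.
  by case: hR => [|[|[|]]] ->; [apply: prefix_splits_cat | apply: suffix_splits_cat
    | apply: infix_splits_cat | apply: subseq_splits_cat].
have R_subseq s w : R s w -> subseq s w.
  by case: hR => [|[|[|]]] -> // => [/prefixW|/suffixW|]; move/infixW.
have R_nil s : R s [::] -> s = [::].
  by move/R_subseq; rewrite subseq0 => /eqP.
have R_cat u v : R u (u ++ v) \/ R v (u ++ v).
  by case: hR => [|[|[|]]] ->; [left; apply: prefix_prefix | right; apply: suffix_suffix
    | left; apply: prefix_infix | left; apply: prefix_subseq].
have closed_starL := star_closed_under R_splits R_nil hclosed.
have star_complL := star_compl_closed R_cat hclosed.
split=> //.
- exact: lang_eq_trans (compl_lang_eq star_complL) (compl_add_eps_compl L).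
- exact: star_rem_eps.
- exact/star_compl_reach_orbit/(star_compl_closed R_cat closed_starL).
Qed.
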